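(* For every Young diagram $\mu$ with $m=|\mu|$ and every $n\ge1$, $$(T_n-\mathbf 1)(FS_\mu)_n=-\frac{m(m-1+zz')}{(n+1)(zz'+n)}(FS_\mu)_n+\frac{n+1-m}{(n+1)(zz'+n)}\sum_{\mu_\bullet\nearrow\mu}(z)_{\mu/\mu_\bullet}(z')_{\mu/\mu_\bullet}(FS_{\mu_\bullet})_n.$$
   Context: $\mathbb Y$ is the set of all Young diagrams (including $\varnothing$), $\mathbb Y_n$ those with $n$ boxes, $|\lambda|$ the number of boxes; $\mu\nearrow\lambda$ (equivalently $\lambda\searrow\mu$) means $\mu\subset\lambda$, $|\lambda|=|\mu|+1$. For a skew diagram $\theta$, $(z)_\theta=\prod_{(i,j)\in\theta}(z+j-i)$ ($(i,j)$ = box in row $i$, column $j$). $\dim\lambda$ is the number of standard Young tableaux of shape $\lambda$ ($\dim\varnothing=1$); $\dim(\mu,\lambda)$ is the number of chains $\mu\nearrow\cdots\nearrow\lambda$. Modified Frobenius coordinates: $\lambda=(a_1,\dots,a_d\mid b_1,\dots,b_d)$, $d$ the number of diagonal boxes, $a_i=\lambda_i-i+\frac12$, $b_i=\lambda'_i-i+\frac12$. $(z,z')$ is fixed in the principal series ($z\notin\mathbb R$, $z'=\bar z$) or complementary series ($z,z'\in(N,N+1)$, $N\in\mathbb Z$). Down transition $p^\downarrow(\nu,\lambda)=\dim\lambda/\dim\nu$ if $\lambda\nearrow\nu$, else 0; up transition for $\lambda\in\mathbb Y_n$: $p^\uparrow(\lambda,\nu)=\frac{(z)_{\nu/\lambda}(z')_{\nu/\lambda}}{zz'+n}\frac{\dim\nu}{(n+1)\dim\lambda}$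 if $\nu\searrow\lambda$, else 0. $T_n$ acts on real functions $g$ on $\mathbb Y_n$ by $(T_ng)(\lambda)=\sum_{\nu\in\mathbb Y_{n+1}}p^\uparrow(\lambda,\nu)\sum_{\tilde\lambda\in\mathbb Y_n}p^\downarrow(\nu,\tilde\lambda)g(\tilde\lambda)$; $\mathbf 1$ is the identity. $\Lambda=\mathbb R[p_1,p_2,\dots]$ (symmetric functions) is viewed as functions on $\mathbb Y$ via $p_k(\lambda)=\sum_ia_i^k+(-1)^{k-1}\sum_ib_i^k$; $f_n$ is the restriction of $f\in\Lambda$ to $\mathbb Y_n$. $FS_\mu\in\Lambda$ is the Frobenius–Schur function, characterized by $FS_\mu(\lambda)=n^{\downarrow m}\dim(\mu,\lambda)/\dim\lambda$ for all $\lambda$ ($n=|\lambda|$, $m=|\mu|$, $n^{\downarrow m}=n(n-1)\cdots(n-m+1)$). *)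

From HB Require Import structures.
From mathcomp Require Import all_boot all_order all_algebra.
From mathcomp Require Export complex.
Set Implicit Arguments. Unset Strict Implicit. Unset Printing Implicit Defensive.
Import Order.TTheory GRing.Theory Num.Theory.
Local Open Scope ring_scope.

(* A Young diagram is the sequence of its (positive) row lengths, weakly
   decreasing.  |lambda| = sumn lambda. *)
Definition is_part (l : seq nat) : bool :=
  sorted geq l && all (fun x => 0 < x)%N l.

(* Y_n : the (duplicate-free) list of all Young diagrams with n boxes.
   Every such diagram has at most n rows, each of length at most n, so it is
   obtained from some n-tuple with entries <= n by deleting zeros. *)
Definition Yn (n : nat) : seq (seq nat) :=
  undup [seq l <- [seq [seq x <- map val (tval t) | (0 < x)%N]
                  | t : n.-tuple 'I_n.+1]
        | is_part l && (sumn l == n)].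

Definition subdiag (mu la : seq nat) : bool :=
  (size mu <= size la)%N && all (fun i => nth 0 mu i <= nth 0 la i)%N (iota 0 (size la)).

Definition nearrow (mu la : seq nat) : bool :=
  subdiag mu la && (sumn la == (sumn mu).+1).

Fixpoint dimk (k : nat) (mu la : seq nat) : nat :=
  match k with
  | 0 => nat_of_bool (mu == la)
  | k'.+1 => \sum_(ka <- Yn (sumn la).-1 | nearrow ka la) dimk k' mu ka
  end.

Definition dimc (mu la : seq nat) : nat :=
  if (sumn mu <= sumn la)%N then dimk (sumn la - sumn mu) mu la else 0.

Definition dimY (la : seq nat) : nat := dimc [::] la.

Section Kernels.
Variable F : fieldType.

(* (z)_{lambda/mu} = prod over boxes (i,j) of lambda/mu of (z + j - i);
   with 0-based indices i,j the box (i+1,j+1) has content j - i. *)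
Definition poch (z : F) (mu la : seq nat) : F :=
  \prod_(i < size la) \prod_(nth 0 mu i <= j < nth 0 la i) (z + j%:R - i%:R).

Definition FS (mu la : seq nat) : F :=
  ((sumn la) ^_ (sumn mu))%:R * (dimc mu la)%:R / (dimY la)%:R.

Definition pdown (nu la : seq nat) : F :=
  if nearrow la nu then (dimY la)%:R / (dimY nu)%:R else 0.

Definition pup (z z' : F) (la nu : seq nat) : F :=
  if nearrow la nu then
    poch z la nu * poch z' la nu / (z * z' + (sumn la)%:R)
    * (dimY nu)%:R / ((sumn la).+1%:R * (dimY la)%:R)
  else 0.

Definition Tn (z z' : F) (n : nat) (g : seq nat -> F) (la : seq nat) : F :=
  \sum_(nu <- Yn n.+1) pup z z' la nu * \sum_(lt <- Yn n) pdown nu lt * g lt.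
End Kernels.

Definition admissible (R : rcfType) (z z' : R[i]) : Prop :=
  (complex.Im z != 0 /\ z' = conjc z) \/
  (exists N : int, complex.Im z = 0 /\ complex.Im z' = 0 /\
     N%:~R < complex.Re z < (N + 1)%:~R /\ N%:~R < complex.Re z' < (N + 1)%:~R).

(* Write W(k, l) = (z)_{l/k} (z')_{l/k}.  Unfolding p^up, p^down and FS, the
   statement at lambda in Y_n reduces to the identity
     sum_{nu \ lambda} W(lambda, nu) dim(mu, nu)
       = c(n, m) dim(mu, lambda) + sum_{mu' / mu} W(mu', mu) dim(mu', lambda),
     c(n, m) = (n + 1 - m) z z' + n (n + 1) - m (m - 1),
   together with n^{down m} = n^{down (m-1)} (n + 1 - m).  The identity follows
   by induction on n from the commutation relation
     sum_{nu \ lambda} W(lambda, nu) sum_{k / nu} g(k)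
       = sum_{k / lambda} sum_{nu \ k} W(k, nu) g(nu) + (z z' + 2 n) g(lambda)
   applied to g = dim(mu, .).  Off the diagonal both sides of the relation agree
   because two distinct diagrams of the same size have at most one common
   successor, their union, and at most one common predecessor, their
   intersection, and (lambda u x)/lambda and x/(lambda n x) are the same box.  On the
   diagonal the difference of weights telescopes along the rim of lambda. *)

From HB Require Import structures.
From mathcomp Require Import all_boot all_order all_algebra.
From mathcomp Require Import complex.
From mathcomp Require Import zify ring lra.
Import Order.TTheory GRing.Theory Num.Theory.
Set Implicit Arguments. Unset Strict Implicit.

Section Partitions.
Local Open Scope nat_scope.

Lemma noninc_leq (f : nat -> nat) : (forall i, f i.+1 <= f i) ->
  forall i j, i <= j -> f j <= f i.
Proof.
move=> mon; apply: (@homo_leq _ f (fun a b => b <= a)) => // y x z.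
by move=> /[swap]; apply: leq_trans.
Qed.

Lemma part_nth_leq l i j : is_part l -> i <= j -> nth 0 l j <= nth 0 l i.
Proof.
case/andP=> srt _ ij; case: (ltnP j (size l)) => jl; last by rewrite nth_default.
have tr : transitive geq by move=> a b c h1 h2; exact: leq_trans h2 h1.
exact: (sorted_leq_nth tr leqnn 0 srt) (leq_ltn_trans ij jl) _ ij.
Qed.

Lemma part_size_gt l i : is_part l -> (i < size l) = (0 < nth 0 l i).
Proof.
case/andP=> _ pos; case: (ltnP i (size l)) => il; last by rewrite nth_default.
by rewrite (allP pos) // mem_nth.
Qed.

Lemma is_part_nth l : (forall i, nth 0 l i.+1 <= nth 0 l i) ->
  (forall i, i < size l -> 0 < nth 0 l i) -> is_part l.
Proof.
move=> mon pos; apply/andP; split; first by apply/(sortedP 0) => i _; exact: mon.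
by apply/(all_nthP 0) => i il; exact: pos.
Qed.

Lemma eq_part_nth a b : is_part a -> is_part b ->
  (forall i, nth 0 a i = nth 0 b i) -> a = b.
Proof.
move=> pa pb e.
have hs i : (i < size a) = (i < size b) by rewrite (part_size_gt i pa) (part_size_gt i pb) e.
have sz : size a = size b by have := hs (size a); have := hs (size b); rewrite !ltnn; lia.
by apply: (eq_from_nth (x0 := 0)) => // i _; apply: e.
Qed.

Lemma sumn_big_nth l N : size l <= N -> sumn l = \sum_(0 <= i < N) nth 0 l i.
Proof.
move=> hN; rewrite sumnE (big_nth 0) (big_cat_nat (leq0n _) hN) /=.
rewrite [X in _ + X]big1_seq ?addn0 // => i /andP[_]; rewrite mem_index_iota => /andP[h _].
by rewrite nth_default.
Qed.

Lemma nth_leq_sumn l i : nth 0 l i <= sumn l.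
Proof.
elim: l i => [|x l IH] [|i] //=; first exact: leq_addr.
exact: leq_trans (IH i) (leq_addl _ _).
Qed.

Lemma size_part_leq_sumn l : is_part l -> size l <= sumn l.
Proof.
move=> /andP[_]; elim: l => [|x l IH] //= /andP[x0 al].
by rewrite -addn1 addnC leq_add // IH.
Qed.

Definition contained (a b : seq nat) := forall i, nth 0 a i <= nth 0 b i.

Lemma leq_sumn_contained a b : contained a b -> sumn a <= sumn b.
Proof.
move=> h; set N := maxn (size a) (size b).
rewrite (@sumn_big_nth a N) ?leq_maxl // (@sumn_big_nth b N) ?leq_maxr //.
by apply: leq_sum => i _.
Qed.

Lemma contained_sumn_nth a b : contained a b -> sumn a = sumn b ->
  forall i, nth 0 a i = nth 0 b i.
Proof.
move=> h e i; set N := maxn (size a) (size b).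
case: (ltnP i N) => iN; last first.
  by rewrite !nth_default // (leq_trans _ iN) // ?leq_maxl ?leq_maxr.
move: e; rewrite (@sumn_big_nth a N) ?leq_maxl // (@sumn_big_nth b N) ?leq_maxr //.
have -> : \sum_(0 <= i < N) nth 0 b i =
    \sum_(0 <= i < N) nth 0 a i + \sum_(0 <= i < N) (nth 0 b i - nth 0 a i).
  by rewrite -big_split /=; apply: eq_bigr => j _; rewrite subnKC.
move/eqP; rewrite -{1}[\sum_(0 <= i < N) nth 0 a i]addn0 eqn_add2l eq_sym sum_nat_seq_eq0.
move/allP/(_ i); rewrite mem_index_iota iN /= => /(_ isT) /eqP.
by move: (h i); lia.
Qed.

Lemma contained_sumn_eq a b : is_part a -> is_part b ->
  contained a b -> sumn a = sumn b -> a = b.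
Proof. by move=> pa pb h e; apply: eq_part_nth => //; apply: contained_sumn_nth. Qed.

Lemma subdiagP a b : is_part a -> reflect (contained a b) (subdiag a b).
Proof.
move=> pa; apply: (iffP andP) => [[sz /allP h] i|h].
- case: (ltnP i (size b)) => ib; first by apply: h; rewrite mem_iota.
  by rewrite (nth_default _ (leq_trans sz ib)).
- split; last by apply/allP => i _; exact: h i.
  rewrite leqNgt; apply/negP => lt.
  have := part_size_gt (size b) pa; rewrite lt => /esym pos.
  by have := h (size b); rewrite [nth 0 b _]nth_default // leqn0 => /eqP e; rewrite e in pos.
Qed.

Lemma nearrowP a b : is_part a ->
  reflect (contained a b /\ sumn b = (sumn a).+1) (nearrow a b).
Proof.
move=> pa; apply: (iffP andP).
- by case=> /(subdiagP _ pa) h /eqP e.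
- by case=> h e; split; [apply/subdiagP | apply/eqP].
Qed.

Lemma memYn la n : (la \in Yn n) = is_part la && (sumn la == n).
Proof.
rewrite /Yn mem_undup mem_filter; apply/andP/idP => [[]//|h]; split => //.
case/andP: h => pl /eqP sl.
have hle i : nth 0 la i < n.+1 by rewrite ltnS -sl nth_leq_sumn.
pose s := [seq (inord (nth 0 la i) : 'I_n.+1) | i <- iota 0 n].
have ss : size s == n by rewrite size_map size_iota.
apply/imageP; exists (Tuple ss) => //=.
have -> : map val s = [seq nth 0 la i | i <- iota 0 n].
  by rewrite -map_comp; apply: eq_map => i /=; rewrite inordK.
have szl := size_part_leq_sumn pl; rewrite sl in szl.
rewrite -(subnKC szl) iotaD map_cat filter_cat.
have -> : [seq nth 0 la i | i <- iota 0 (size la)] = la by exact: (mkseq_nth 0 la).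
case/andP: (pl) => _ apos.
rewrite (all_filterP apos) (@eq_in_filter _ _ pred0) ?filter_pred0 ?cats0 //.
by move=> x /mapP[j]; rewrite mem_iota => /andP[hj _] ->; rewrite nth_default.
Qed.

Lemma YnP la n : la \in Yn n -> is_part la /\ sumn la = n.
Proof. by rewrite memYn => /andP[? /eqP]. Qed.

Lemma Yn_uniq n : uniq (Yn n).
Proof. exact: undup_uniq. Qed.

Lemma nearrow_sumn a b : is_part a -> nearrow a b -> sumn b = (sumn a).+1.
Proof. by move=> pa /(nearrowP _ pa)[]. Qed.

End Partitions.

Section Corners.
Local Open Scope nat_scope.

Definition part_of (f : nat -> nat) N := mkseq f (count (fun i => 0 < f i) (iota 0 N)).

Lemma part_of_count f N : (forall i, f i.+1 <= f i) ->
  forall i, i < N -> (0 < f i) = (i < count (fun j => 0 < f j) (iota 0 N)).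
Proof.
move=> mon; elim: N => [//|N IH] i iN.
rewrite -[N.+1]addn1 iotaD count_cat /= addn0 add0n.
have cN : count (fun j => 0 < f j) (iota 0 N) <= N.
  by rewrite -{2}(size_iota 0 N) count_size.
case: (posnP (f N)) => [fN0 | fNp].
- rewrite -[_ + false]/(_ + 0) addn0.
  case: (ltnP i N) => [iN'|iN']; first by apply: IH.
  have -> : i = N by lia.
  by rewrite fN0 ltnn; apply/esym/negbTE; rewrite -leqNgt.
- have -> : count (fun j => 0 < f j) (iota 0 N) = N.
    rewrite -{2}(size_iota 0 N) -count_predT; apply: eq_in_count => j.
    rewrite mem_iota => /andP[_ jN] /=.
    exact: leq_trans fNp (noninc_leq mon (ltnW jN)).
  rewrite -[_ + true]/(N + 1) addn1 iN; apply: leq_trans fNp (noninc_leq mon _); lia.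
Qed.

Lemma part_ofP f N : (forall i, f i.+1 <= f i) -> (forall i, N <= i -> f i = 0) ->
  [/\ is_part (part_of f N), forall i, nth 0 (part_of f N) i = f i
    & size (part_of f N) <= N].
Proof.
move=> mon z.
have kN : count (fun j => 0 < f j) (iota 0 N) <= N.
  by rewrite -{2}(size_iota 0 N) count_size.
have nthE i : nth 0 (part_of f N) i = f i.
  rewrite /part_of; case: (ltnP i (count (fun j => 0 < f j) (iota 0 N))) => ik.
    by rewrite nth_mkseq.
  rewrite nth_default ?size_mkseq //.
  case: (ltnP i N) => iN; last by rewrite z.
  move: (part_of_count mon iN); rewrite [X in _ = X]ltnNge ik /=.
  by move=> /negbT; rewrite -leqNgt leqn0 => /eqP.
split => //; last by rewrite size_mkseq.
apply: is_part_nth => [i|i]; rewrite ?nthE //.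
by rewrite size_mkseq => ik; rewrite (part_of_count mon (leq_trans ik kN)).
Qed.

(* Rows are numbered from 0; [remove_box la i] is a diagram only when row i
   of la is removable. *)
Definition addable (la : seq nat) i := (i == 0) || (nth 0 la i < nth 0 la i.-1).
Definition removable (la : seq nat) i := nth 0 la i.+1 < nth 0 la i.
Definition remove_box (la : seq nat) i := part_of (fun j => nth 0 la j - (i == j)) (size la).

Lemma addable_leq_size la i : addable la i -> i <= size la.
Proof.
case/orP => [/eqP -> //|]; case: i => //= i h.
by rewrite ltnNge; apply/negP => hs; move: h; rewrite [nth 0 la i]nth_default.
Qed.

Lemma removable_lt_size la i : removable la i -> i < size la.
Proof.
rewrite /removable => h; rewrite ltnNge; apply/negP => hs.
by move: h; rewrite [nth 0 la i]nth_default // (leq_trans hs).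
Qed.

Lemma sumn_incr_nth la i : sumn (incr_nth la i) = (sumn la).+1.
Proof.
elim: la i => [|x la IH] [|i] //=; first by elim: i.
by rewrite IH addnS.
Qed.

Lemma is_part_incr_nth la i : is_part la -> addable la i -> is_part (incr_nth la i).
Proof.
move=> pl ad; apply: is_part_nth => [j|j]; rewrite !nth_incr_nth.
- case: (eqVneq i j.+1) => [e|ne].
  + by move: ad; rewrite /addable e /= (gtn_eqF (ltnSn j)) add1n.
  + by rewrite add0n (leq_trans (part_nth_leq pl (leqnSn j))) // leq_addl.
- rewrite size_incr_nth => hj.
  case: (ltnP j (size la)) => jl.
    by rewrite (part_size_gt j pl) in jl; rewrite (leq_trans jl) // leq_addl.
  have hs := addable_leq_size ad.
  by move: hj; case: ifP => hi hj; [lia | have -> : i == j by apply/eqP; lia].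
Qed.

Lemma nearrow_incr_nth la i : is_part la -> nearrow la (incr_nth la i).
Proof.
move=> pl; apply/nearrowP => //; split; last exact: sumn_incr_nth.
by move=> j; rewrite nth_incr_nth leq_addl.
Qed.

Lemma nearrow_addable la nu : is_part la -> is_part nu -> nearrow la nu ->
  exists2 i, addable la i & nu = incr_nth la i.
Proof.
move=> pl pn /(nearrowP _ pl) [le e].
have : has (fun i => nth 0 la i < nth 0 nu i) (iota 0 (size nu)).
  apply/negPn/negP => /hasPn h.
  have eq i : nth 0 la i = nth 0 nu i.
    case: (ltnP i (size nu)) => hi.
      have := h i; rewrite mem_iota hi /= => /(_ isT); rewrite -leqNgt => h2.
      by apply/eqP; rewrite eqn_leq le h2.
    by have := le i; rewrite [nth 0 nu i]nth_default // leqn0 => /eqP ->.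
  have : sumn nu <= sumn la by apply: leq_sumn_contained => i; rewrite eq.
  by rewrite e ltnn.
case/hasP => i _ hi.
have le2 : contained (incr_nth la i) nu.
  by move=> j; rewrite nth_incr_nth; case: eqP => [<-|_] //; rewrite add0n.
have eqs := contained_sumn_nth le2 (etrans (sumn_incr_nth la i) (esym e)).
have ad : addable la i.
  apply/orP; case: i hi le2 eqs => [|i] hi le2 eqs; [by left|right] => /=.
  have := part_nth_leq pn (leqnSn i).
  by rewrite -!eqs !nth_incr_nth eqxx (gtn_eqF (ltnSn i)) add1n.
by exists i => //; apply: eq_part_nth => //; exact: is_part_incr_nth.
Qed.

Lemma remove_boxP la i : is_part la -> removable la i ->
  [/\ is_part (remove_box la i), forall j, nth 0 (remove_box la i) j = nth 0 la j - (i == j)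
    & la = incr_nth (remove_box la i) i].
Proof.
move=> pl rm.
have [p1 p2 _] : [/\ is_part (remove_box la i),
    forall j, nth 0 (remove_box la i) j = nth 0 la j - (i == j)
    & size (remove_box la i) <= size la].
  apply: part_ofP => [j|j hj]; last by rewrite nth_default.
  have mj := part_nth_leq pl (leqnSn j); move: rm; rewrite /removable.
  case: (eqVneq i j) => [->|ne1]; first by rewrite (ltn_eqF (ltnSn j)) subn0; lia.
  case: (eqVneq i j.+1) => [->|ne2] _; last by rewrite !subn0.
  by rewrite subn0; exact: leq_trans (leq_subr _ _) mj.
have ad : addable (remove_box la i) i.
  apply/orP; case: i rm p1 p2 => [|i] rm p1 p2; [by left | right] => /=.
  rewrite !p2 eqxx (gtn_eqF (ltnSn i)).
  by have := part_nth_leq pl (leqnSn i); move: rm; rewrite /removable; lia.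
split => //; apply: eq_part_nth => //; first exact: is_part_incr_nth.
move=> j; rewrite nth_incr_nth p2; case: eqP => [<-|_] /=; last by rewrite subn0.
by move: rm; rewrite /removable; lia.
Qed.

Lemma nearrow_remove_box la i : is_part la -> removable la i ->
  nearrow (remove_box la i) la.
Proof. by move=> pl rm; have [p1 _ e] := remove_boxP pl rm; rewrite {2}e nearrow_incr_nth. Qed.

Lemma nearrow_removable ka la : is_part ka -> is_part la -> nearrow ka la ->
  exists2 i, removable la i & ka = remove_box la i.
Proof.
move=> pk pl h; have [i ad e] := nearrow_addable pk pl h.
have rm : removable la i.
  by rewrite /removable e !nth_incr_nth eqxx (ltn_eqF (ltnSn i)) add0n add1n ltnS part_nth_leq.
exists i => //; have [p1 p2 _] := remove_boxP pl rm.
apply: eq_part_nth => // j; rewrite p2 e nth_incr_nth.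
by case: eqP => /= _; rewrite ?subn0 // add1n subn1.
Qed.

End Corners.

Section NeighbourSums.
Variable V : zmodType.
Local Open Scope nat_scope.

Lemma sum_nearrow_up (G : seq nat -> V) la n : la \in Yn n ->
  (\sum_(nu <- Yn n.+1 | nearrow la nu) G nu =
   \sum_(i <- iota 0 (size la).+1 | addable la i) G (incr_nth la i))%R.
Proof.
move=> /YnP[pla sla].
rewrite -big_filter -[RHS]big_filter -(big_map (incr_nth la) xpredT G).
apply: perm_big; apply: uniq_perm.
- by rewrite filter_uniq // Yn_uniq.
- by rewrite (map_inj_uniq (@incr_nth_inj la)) filter_uniq // iota_uniq.
move=> nu; rewrite mem_filter; apply/andP/mapP.
- case=> hn /YnP[pn _]; have [i ad ->] := nearrow_addable pla pn hn.
  by exists i => //; rewrite mem_filter ad mem_iota /= ltnS addable_leq_size.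
- case=> i; rewrite mem_filter => /andP[ad _] ->; split; first exact: nearrow_incr_nth.
  by rewrite memYn is_part_incr_nth //= sumn_incr_nth sla.
Qed.

Lemma sum_nearrow_down (G : seq nat -> V) la n : la \in Yn n ->
  (\sum_(ka <- Yn n.-1 | nearrow ka la) G ka =
   \sum_(i <- iota 0 (size la) | removable la i) G (remove_box la i))%R.
Proof.
move=> /YnP[pla sla].
rewrite -big_filter -[RHS]big_filter -(big_map (remove_box la) xpredT G).
apply: perm_big; apply: uniq_perm.
- by rewrite filter_uniq // Yn_uniq.
- rewrite map_inj_in_uniq ?filter_uniq ?iota_uniq //.
  move=> i j; rewrite !mem_filter => /andP[ri _] /andP[rj _] e.
  have [_ _ ei] := remove_boxP pla ri; have [_ _ ej] := remove_boxP pla rj.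
  by apply: (@incr_nth_inj (remove_box la i)); rewrite -ei e -ej.
move=> ka; rewrite mem_filter; apply/andP/mapP.
- case=> hn /YnP[pk _]; have [i rm ->] := nearrow_removable pk pla hn.
  by exists i => //; rewrite mem_filter rm mem_iota /= removable_lt_size.
- case=> i; rewrite mem_filter => /andP[rm _] ->; split; first exact: nearrow_remove_box.
  have [p1 _ e] := remove_boxP pla rm.
  by rewrite memYn p1 /= -sla {2}e sumn_incr_nth.
Qed.

End NeighbourSums.

Lemma big_seq_cond_pred1 (V : zmodType) (T : eqType) (s : seq T) (P : pred T)
    (G : T -> V) a :
  uniq s -> (forall y, (y \in s) && P y = (y == a)) -> (\sum_(y <- s | P y) G y = G a)%R.
Proof.
move=> us h; have /andP[ain _] : (a \in s) && P a by rewrite h.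
rewrite big_seq_cond (eq_bigl (pred1 a)) // big_mkcond (bigD1_seq a) //= eqxx.
by rewrite big1 ?addr0 // => y /negbTE ->.
Qed.

Section Poch.
Variable F : fieldType.
Local Open Scope ring_scope.

Lemma poch_big_nat (z : F) a b N : (size b <= N)%N ->
  poch z a b = \prod_(0 <= j < N) \prod_(nth 0%N a j <= k < nth 0%N b j) (z + k%:R - j%:R).
Proof.
move=> hN; rewrite /poch -(big_mkord xpredT (fun j =>
  \prod_(nth 0%N a j <= k < nth 0%N b j) (z + k%:R - j%:R))).
rewrite (big_cat_nat (leq0n _) hN) /= [X in _ = _ * X]big1_seq ?mulr1 //.
move=> j /andP[_]; rewrite mem_index_iota => /andP[hj _].
by rewrite [nth 0%N b j]nth_default // big_geq.
Qed.

Lemma poch_box (z : F) a b i :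
  (forall j, nth 0%N b j = (nth 0%N a j + (i == j))%N) -> (i < size b)%N ->
  poch z a b = z + (nth 0%N a i)%:R - i%:R.
Proof.
move=> e ib; rewrite (poch_big_nat z a (leqnn _)).
rewrite (bigD1_seq i) ?mem_index_iota ?iota_uniq //= e eqxx addn1 big_nat1.
by rewrite big1_seq ?mulr1 // => j /andP[ne _]; rewrite e eq_sym (negbTE ne) addn0 big_geq.
Qed.

Lemma poch_incr_nth (z : F) la i : addable la i ->
  poch z la (incr_nth la i) = z + (nth 0%N la i)%:R - i%:R.
Proof.
move=> ad; apply: poch_box => [j|]; first by rewrite nth_incr_nth addnC.
by rewrite size_incr_nth; have := addable_leq_size ad; case: ifP => //; lia.
Qed.

Lemma poch_remove_box (z : F) la i : is_part la -> removable la i ->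
  poch z (remove_box la i) la = z + (nth 0%N la i)%:R - 1 - i%:R.
Proof.
move=> pl rm; have [_ p2 e] := remove_boxP pl rm.
rewrite (@poch_box z _ _ i) ?removable_lt_size //; last first.
  by move=> j; rewrite {1}e nth_incr_nth addnC.
by rewrite p2 eqxx natrB ?subr0 ?addrA //; move: rm; rewrite /removable; lia.
Qed.

End Poch.

Section UnionInter.
Local Open Scope nat_scope.

Definition union_part a b :=
  part_of (fun j => maxn (nth 0 a j) (nth 0 b j)) (maxn (size a) (size b)).
Definition inter_part a b :=
  part_of (fun j => minn (nth 0 a j) (nth 0 b j)) (maxn (size a) (size b)).

Lemma union_partP a b : is_part a -> is_part b ->
  [/\ is_part (union_part a b),
      forall j, nth 0 (union_part a b) j = maxn (nth 0 a j) (nth 0 b j)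
    & size (union_part a b) <= maxn (size a) (size b)].
Proof.
move=> pa pb; apply: part_ofP.
- by move=> j; have := part_nth_leq pa (leqnSn j); have := part_nth_leq pb (leqnSn j); lia.
- by move=> j; rewrite geq_max => /andP[ha hb]; rewrite !nth_default.
Qed.

Lemma inter_partP a b : is_part a -> is_part b ->
  [/\ is_part (inter_part a b),
      forall j, nth 0 (inter_part a b) j = minn (nth 0 a j) (nth 0 b j)
    & size (inter_part a b) <= maxn (size a) (size b)].
Proof.
move=> pa pb; apply: part_ofP.
- by move=> j; have := part_nth_leq pa (leqnSn j); have := part_nth_leq pb (leqnSn j); lia.
- by move=> j; rewrite geq_max => /andP[ha hb]; rewrite !nth_default.
Qed.

Lemma sumn_union_inter a b : is_part a -> is_part b ->
  sumn (union_part a b) + sumn (inter_part a b) = sumn a + sumn b.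
Proof.
move=> pa pb; have [_ h1 s1] := union_partP pa pb; have [_ h2 s2] := inter_partP pa pb.
set N := maxn (size a) (size b).
rewrite (sumn_big_nth s1) (sumn_big_nth s2).
rewrite (@sumn_big_nth a N) ?leq_maxl // (@sumn_big_nth b N) ?leq_maxr //.
by rewrite -!big_split /=; apply: eq_bigr => j _; rewrite h1 h2; lia.
Qed.

Lemma contained_union_part a b c : is_part a -> is_part b ->
  contained a c -> contained b c -> contained (union_part a b) c.
Proof. by move=> pa pb h1 h2 j; have [_ -> _] := union_partP pa pb; rewrite geq_max h1 h2. Qed.

Lemma contained_inter_part a b c : is_part a -> is_part b ->
  contained c a -> contained c b -> contained c (inter_part a b).
Proof. by move=> pa pb h1 h2 j; have [_ -> _] := inter_partP pa pb; rewrite leq_min h1 h2. Qed.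

Lemma nearrow_union_part a b : is_part a -> is_part b -> sumn a = sumn b ->
  sumn (union_part a b) = (sumn a).+1 ->
  nearrow a (union_part a b) && nearrow b (union_part a b).
Proof.
move=> pa pb e s; have [_ h _] := union_partP pa pb.
by apply/andP; split; apply/nearrowP; rewrite // -?e; split => // j; rewrite h ?leq_maxl ?leq_maxr.
Qed.

Lemma nearrow_inter_part a b : is_part a -> is_part b -> sumn a = sumn b ->
  (sumn (inter_part a b)).+1 = sumn a ->
  nearrow (inter_part a b) a && nearrow (inter_part a b) b.
Proof.
move=> pa pb e s; have [p h _] := inter_partP pa pb.
by apply/andP; split; apply/nearrowP; rewrite // -?e; split => // j; rewrite h ?geq_minl ?geq_minr.
Qed.

End UnionInter.

Section Weights.
Variable F : fieldType.
Variables z z' : F.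
Local Open Scope ring_scope.

Definition poch2 a b := poch z a b * poch z' a b.

Lemma poch_union_inter (y : F) la x : is_part la -> is_part x ->
  poch y la (union_part la x) = poch y (inter_part la x) x.
Proof.
move=> pl px; have [_ h1 s1] := union_partP pl px; have [_ h2 _] := inter_partP pl px.
rewrite (poch_big_nat _ _ s1) (@poch_big_nat _ _ _ _ (maxn (size la) (size x))) ?leq_maxr //.
apply: eq_bigr => j _; rewrite h1 h2.
by case: (leqP (nth 0%N la j) (nth 0%N x j)) => h //; rewrite !big_geq // ltnW.
Qed.

Lemma sum_poch2_common_neighbours la x n : la \in Yn n -> x \in Yn n -> x != la ->
  \sum_(nu <- Yn n.+1 | nearrow la nu && nearrow x nu) poch2 la nu =
  \sum_(ka <- Yn n.-1 | nearrow ka la && nearrow ka x) poch2 ka x.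
Proof.
move=> /YnP[pl sl] /YnP[px sx] ne.
have [pM hM _] := union_partP pl px; have [pm hm _] := inter_partP pl px.
have sMm := sumn_union_inter pl px; rewrite sl sx in sMm.
have up nu : is_part nu -> nearrow la nu -> nearrow x nu -> contained (union_part la x) nu.
  by move=> pn /(nearrowP _ pl)[h1 _] /(nearrowP _ px)[h2 _]; apply: contained_union_part.
have dn ka : is_part ka -> nearrow ka la -> nearrow ka x -> contained ka (inter_part la x).
  by move=> pk /(nearrowP _ pk)[h1 _] /(nearrowP _ pk)[h2 _]; apply: contained_inter_part.
have sMge : (n < sumn (union_part la x))%N.
  have leM : contained la (union_part la x) by move=> j; rewrite hM leq_maxl.
  rewrite ltn_neqAle -sl eq_sym leq_sumn_contained // andbT; apply/negP => /eqP e.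
  have e1 := contained_sumn_eq pl pM leM (esym e).
  have leM2 : contained x la by rewrite e1 => j; rewrite hM leq_maxr.
  by move: ne; rewrite (contained_sumn_eq px pl leM2) ?sx ?sl ?eqxx.
case: (eqVneq (sumn (union_part la x)) n.+1) => eM; last first.
  rewrite !big1_seq // => [ka|nu] /andP[/andP[h1 h2] /YnP[p s]].
  + by have := leq_sumn_contained (dn _ p h1 h2); have := nearrow_sumn p h1; lia.
  + by have := leq_sumn_contained (up _ p h1 h2); lia.
have em : sumn (inter_part la x) = n.-1 by lia.
rewrite (big_seq_cond_pred1 (a := union_part la x) _ (Yn_uniq _)); last first.
  move=> nu; apply/idP/eqP => [/andP[/YnP[pn sn] /andP[h1 h2]]|->].
    by apply/esym/contained_sumn_eq => //; [apply: up | rewrite sn].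
  by rewrite memYn pM eM eqxx nearrow_union_part // ?sl ?sx.
rewrite (big_seq_cond_pred1 (a := inter_part la x) _ (Yn_uniq _)); last first.
  move=> ka; apply/idP/eqP => [/andP[/YnP[pk sk] /andP[h1 h2]]|->].
    by apply: contained_sumn_eq => //; [apply: dn | rewrite sk].
  by rewrite memYn pm em eqxx nearrow_inter_part // ?sl ?sx ?em //; lia.
by rewrite /poch2 !poch_union_inter.
Qed.

Let cpoch (c : F) := (z + c) * (z' + c).
(* Content of the box that row j of la would receive next. *)
Let next_content la j : F := (nth 0%N la j)%:R - j%:R.

Lemma sum_cpoch_diff (g : nat -> F) S :
  \sum_(0 <= i < S) (cpoch (g i - i%:R) - cpoch (g i - i%:R - 1)) =
  S%:R * (z + z') + 2 * \sum_(0 <= i < S) g i - S%:R ^+ 2.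
Proof.
elim: S => [|S IH]; first by rewrite !big_geq // mulr0 mul0r expr2 mulr0 !subr0 addr0.
by rewrite !big_nat_recr //= IH /cpoch -[S.+1]addn1 natrD; ring.
Qed.

Lemma sum_poch2_incr_nth la :
  \sum_(i <- iota 0 (size la).+1 | addable la i) poch2 la (incr_nth la i) =
  cpoch (next_content la 0) +
  \sum_(i <- iota 0 (size la) | removable la i) cpoch (next_content la i.+1).
Proof.
rewrite /= big_cons /addable eqxx /= /poch2 !poch_incr_nth /addable ?eqxx //.
rewrite /cpoch /next_content !addrA; congr (_ + _).
rewrite -[iota 1 _]/(iota (1 + 0) _) iotaDl big_map.
apply: eq_big => i; first by rewrite /removable add1n.
rewrite /removable add1n => rm.
by rewrite !poch_incr_nth /addable /= ?rm ?orbT // !addrA.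
Qed.

Lemma sum_poch2_remove_box la : is_part la ->
  \sum_(i <- iota 0 (size la) | removable la i) poch2 (remove_box la i) la =
  \sum_(i <- iota 0 (size la) | removable la i) cpoch (next_content la i - 1).
Proof.
move=> pl; apply: eq_bigr => i rm.
by rewrite /poch2 !poch_remove_box // /cpoch /next_content; congr (_ * _); ring.
Qed.

Lemma sum_poch2_up_sub_down la n : la \in Yn n ->
  \sum_(nu <- Yn n.+1 | nearrow la nu) poch2 la nu -
  \sum_(ka <- Yn n.-1 | nearrow ka la) poch2 ka la = z * z' + 2 * n%:R.
Proof.
move=> hla; have [pl sl] := YnP hla.
rewrite (sum_nearrow_up _ hla) (sum_nearrow_down _ hla).
rewrite sum_poch2_incr_nth sum_poch2_remove_box // -addrA -sumrB big_mkcond /=.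
set S := size la; set a := next_content la.
have -> : \sum_(i <- iota 0 S)
      (if removable la i then cpoch (a i.+1) - cpoch (a i - 1) else 0) =
    \sum_(0 <= i < S) ((cpoch (a i.+1) - cpoch (a i)) + (cpoch (a i) - cpoch (a i - 1))).
  rewrite /index_iota subn0; apply: eq_bigr => i _.
  case: ifP => rm; first by rewrite addrA subrK.
  have e : nth 0%N la i.+1 = nth 0%N la i.
    by apply/eqP; rewrite eqn_leq part_nth_leq //= leqNgt; move: rm; rewrite /removable => ->.
  by rewrite addrA subrK /a /next_content e -[i.+1]addn1 natrD /cpoch; ring.
rewrite big_split /= telescope_sumr // sum_cpoch_diff.
have -> : \sum_(0 <= i < S) ((nth 0%N la i)%:R : F) = n%:R.
  by rewrite -natr_sum -(sumn_big_nth (leqnn _)) sl.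
by rewrite /a /next_content [nth 0%N la S]nth_default // /cpoch; ring.
Qed.

Lemma up_down_commute (g : seq nat -> F) la n : la \in Yn n ->
  \sum_(nu <- Yn n.+1 | nearrow la nu) poch2 la nu * \sum_(ka <- Yn n | nearrow ka nu) g ka =
  \sum_(ka <- Yn n.-1 | nearrow ka la) \sum_(nu <- Yn n | nearrow ka nu) poch2 ka nu * g nu
  + (z * z' + 2 * n%:R) * g la.
Proof.
move=> hla.
have -> : \sum_(nu <- Yn n.+1 | nearrow la nu)
      poch2 la nu * \sum_(ka <- Yn n | nearrow ka nu) g ka =
    \sum_(x <- Yn n) g x * \sum_(nu <- Yn n.+1 | nearrow la nu && nearrow x nu) poch2 la nu.
  under eq_bigr do rewrite big_distrr.
  rewrite (exchange_big_dep xpredT) //=; apply: eq_bigr => x _.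
  by rewrite big_distrr; apply: eq_bigr => nu _; rewrite mulrC.
have -> : \sum_(ka <- Yn n.-1 | nearrow ka la)
      \sum_(nu <- Yn n | nearrow ka nu) poch2 ka nu * g nu =
    \sum_(x <- Yn n) g x * \sum_(ka <- Yn n.-1 | nearrow ka la && nearrow ka x) poch2 ka x.
  rewrite (exchange_big_dep xpredT) //=; apply: eq_bigr => x _.
  by rewrite big_distrr; apply: eq_bigr => nu _; rewrite mulrC.
rewrite !(bigD1_seq la) ?Yn_uniq //=.
have -> : \sum_(x <- Yn n | x != la) g x *
      \sum_(nu <- Yn n.+1 | nearrow la nu && nearrow x nu) poch2 la nu =
    \sum_(x <- Yn n | x != la) g x *
      \sum_(ka <- Yn n.-1 | nearrow ka la && nearrow ka x) poch2 ka x.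
  rewrite big_seq_cond [RHS]big_seq_cond; apply: eq_bigr => x /andP[hx ne].
  by rewrite sum_poch2_common_neighbours.
rewrite (eq_bigl (nearrow la)); last by move=> nu; rewrite andbb.
rewrite [X in _ = _ * X + _ + _](eq_bigl (fun ka => nearrow ka la)); last first.
  by move=> ka; rewrite andbb.
have /eqP := sum_poch2_up_sub_down hla; rewrite subr_eq => /eqP ->.
ring.
Qed.

End Weights.

Section Dimensions.
Local Open Scope nat_scope.

Lemma dimc_eq mu la : sumn mu = sumn la -> dimc mu la = (mu == la).
Proof. by rewrite /dimc => ->; rewrite leqnn subnn. Qed.

Lemma dimc_gt mu la : sumn la < sumn mu -> dimc mu la = 0.
Proof. by rewrite /dimc ltnNge => /negbTE ->. Qed.

Lemma dimc_rec mu la : sumn mu < sumn la ->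
  dimc mu la = \sum_(ka <- Yn (sumn la).-1 | nearrow ka la) dimc mu ka.
Proof.
move=> lt; rewrite /dimc (ltnW lt).
case e: (sumn la - sumn mu) => [|k]; first by lia.
rewrite /= big_seq_cond [RHS]big_seq_cond; apply: eq_bigr => ka /andP[/YnP[_ ->] _].
by rewrite ifT; [congr dimk | ]; lia.
Qed.

Lemma dimY_gt0 n la : la \in Yn n -> 0 < dimY la.
Proof.
elim: n la => [|n IH] la /YnP[pl sl].
  have : size la == 0 by rewrite -leqn0 -sl size_part_leq_sumn.
  by rewrite size_eq0 => /eqP ->.
rewrite /dimY dimc_rec sl //=.
have S0 : 0 < size la by rewrite (part_size_gt 0 pl); case: la pl sl => //= x l /andP[_ /andP[]].
set i := (size la).-1.
have rm : removable la i.
  rewrite /removable /i prednK // [nth 0 la (size la)]nth_default //.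
  by rewrite -(part_size_gt _ pl) prednK.
have [pk _ e] := remove_boxP pl rm.
have hk : remove_box la i \in Yn n.
  by rewrite memYn pk /=; move: sl; rewrite {1}e sumn_incr_nth => -[->].
rewrite big_mkcond (bigD1_seq (remove_box la i)) ?Yn_uniq //= nearrow_remove_box //.
exact: ltn_addr (IH _ hk).
Qed.

End Dimensions.

Section ChainSums.
Variable F : fieldType.
Variables z z' : F.
Local Open Scope ring_scope.
Local Notation poch2 := (poch2 z z').
Local Notation dim mu la := ((dimc mu la)%:R : F).

Definition chain_coef n m : F :=
  (n%:R + 1 - m%:R) * (z * z') + n%:R * (n%:R + 1) - m%:R * (m%:R - 1).

Lemma natr_dimc_rec mu la : (sumn mu < sumn la)%N ->
  dim mu la = \sum_(ka <- Yn (sumn la).-1 | nearrow ka la) dim mu ka.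
Proof. by move=> h; rewrite (dimc_rec h) natr_sum. Qed.

Lemma sum_eq_indicator (T : eqType) (s : seq T) (P : pred T) (G : T -> F) a :
  uniq s -> a \in s ->
  \sum_(y <- s | P y) G y * (y == a)%:R = if P a then G a else 0.
Proof.
move=> us ain; rewrite big_mkcond (bigD1_seq a) //= eqxx mulr1 big1 ?addr0 //.
by move=> y /negbTE ->; rewrite mulr0 if_same.
Qed.

Lemma sum_poch2_dimc_top la mu n : la \in Yn n -> mu \in Yn n.+1 ->
  \sum_(nu <- Yn n.+1 | nearrow la nu) poch2 la nu * dim mu nu =
  \sum_(mub <- Yn n | nearrow mub mu) poch2 mub mu * dim mub la.
Proof.
move=> hla mun; have [_ sl] := YnP hla; have [_ sm] := YnP mun.
rewrite big_seq_cond (eq_bigr (fun nu => poch2 la nu * (nu == mu)%:R)); last first.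
  by move=> nu /andP[/YnP[_ sn] _]; rewrite dimc_eq ?sn ?sm // eq_sym.
rewrite -big_seq_cond sum_eq_indicator ?Yn_uniq //.
rewrite big_seq_cond (eq_bigr (fun mub => poch2 mub mu * (mub == la)%:R)); last first.
  by move=> mub /andP[/YnP[_ sb] _]; rewrite dimc_eq // sb sl.
by rewrite -big_seq_cond sum_eq_indicator ?Yn_uniq.
Qed.

Lemma sum_poch2_dimc n la mu : la \in Yn n -> is_part mu ->
  \sum_(nu <- Yn n.+1 | nearrow la nu) poch2 la nu * dim mu nu =
  dim mu la * chain_coef n (sumn mu) +
  \sum_(mub <- Yn (sumn mu).-1 | nearrow mub mu) poch2 mub mu * dim mub la.
Proof.
elim/ltn_ind: n la => n IH la hla pmu; have [pl sl] := YnP hla.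
case: (ltngtP (sumn mu) n.+1) => hm; last first.
- rewrite (dimc_gt (la := la)) ?sl ?hm // mul0r add0r /=.
  by apply: sum_poch2_dimc_top; rewrite // memYn pmu hm /=.
- rewrite big1_seq => [|nu /andP[_ /YnP[_ sn]]]; last by rewrite dimc_gt ?mulr0 ?sn.
  rewrite dimc_gt ?sl 1?ltnW // mul0r add0r big1_seq // => mub /andP[_ /YnP[_ sb]].
  by rewrite dimc_gt ?mulr0 // sl sb; lia.
rewrite big_seq_cond (eq_bigr (fun nu => poch2 la nu *
    \sum_(ka <- Yn n | nearrow ka nu) dim mu ka)); last first.
  by move=> nu /andP[/YnP[_ sn] _]; rewrite (natr_dimc_rec (la := nu)) ?sn.
rewrite -big_seq_cond up_down_commute //.
case: n IH hla sl hm => [|n] IH hla sl hm.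
  have m0 : sumn mu = 0%N by lia.
  rewrite !big1_seq ?m0 /chain_coef; first by ring.
  + by move=> mub /andP[h /YnP[pb _]]; move: (nearrow_sumn pb h); rewrite m0.
  + by move=> ka /andP[h /YnP[pk _]]; move: (nearrow_sumn pk h); rewrite sl.
rewrite big_seq_cond (eq_bigr (fun ka => dim mu ka * chain_coef n (sumn mu) +
    \sum_(mub <- Yn (sumn mu).-1 | nearrow mub mu) poch2 mub mu * dim mub ka)); last first.
  by move=> ka /andP[hk _]; apply: IH.
rewrite -big_seq_cond big_split /= -big_distrl /= exchange_big /=.
have -> : (\sum_(ka <- Yn n | nearrow ka la) dim mu ka) * chain_coef n (sumn mu) =
    dim mu la * chain_coef n (sumn mu).
  case: (ltnP (sumn mu) n.+1) => h; first by rewrite (natr_dimc_rec (la := la)) ?sl.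
  have e : sumn mu = n.+1 by lia.
  have -> : chain_coef n (sumn mu) = 0 by rewrite /chain_coef e -natr1; ring.
  by rewrite !mulr0.
rewrite [X in _ = _ + X]big_seq_cond [X in _ + X + _]big_seq_cond.
rewrite (eq_bigr (fun mub => poch2 mub mu * dim mub la)); last first.
  move=> mub /andP[/YnP[pb _] /(nearrow_sumn pb) sb].
  by rewrite -big_distrr /= (natr_dimc_rec (la := la)) ?sl //; lia.
by rewrite /chain_coef -!natr1; ring.
Qed.

End ChainSums.

Local Open Scope ring_scope.

Lemma natr_ffact_pred (R : comPzRingType) n m : (0 < m)%N ->
  ((n ^_ m)%:R : R) = (n ^_ m.-1)%:R * (n.+1%:R - m%:R).
Proof.
case: m => // k _ /=; rewrite ffactnSr.
case: (leqP k n) => h; first by rewrite natrM natrB // -!natr1; ring.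
by rewrite ffact_small // !mul0r.
Qed.

Section Kernels.
Variable F : numFieldType.
Local Open Scope ring_scope.

Lemma natr_dimY_neq0 n la : la \in Yn n -> ((dimY la)%:R : F) != 0.
Proof. by move=> hla; rewrite pnatr_eq0 -lt0n (dimY_gt0 hla). Qed.

Lemma FS_Yn mu la n : la \in Yn n ->
  FS F mu la = (n ^_ sumn mu)%:R * (dimc mu la)%:R / (dimY la)%:R.
Proof. by move=> /YnP[_ <-]. Qed.

Lemma sum_pdown_FS mu nu n : nu \in Yn n.+1 ->
  \sum_(lt <- Yn n) pdown F nu lt * FS F mu lt =
  (n ^_ sumn mu)%:R * (dimc mu nu)%:R / (dimY nu)%:R.
Proof.
move=> hnu; have [_ sn] := YnP hnu; have dnu := natr_dimY_neq0 hnu.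
rewrite big_seq (eq_bigr (fun lt => if nearrow lt nu then
    (n ^_ sumn mu)%:R / (dimY nu)%:R * (dimc mu lt)%:R else 0)); last first.
  move=> lt hlt; rewrite /pdown (FS_Yn _ hlt); case: ifP => _; last by rewrite mul0r.
  by field; rewrite dnu (natr_dimY_neq0 hlt).
rewrite -big_seq -big_mkcond -big_distrr /=.
case: (ltnP (sumn mu) n.+1) => hm; last by rewrite ffact_small // !mul0r.
by rewrite (@natr_dimc_rec _ mu nu) ?sn //=; field.
Qed.

Lemma Tn_FS (z z' : F) mu n la : la \in Yn n -> z * z' + n%:R != 0 ->
  Tn z z' n (FS F mu) la =
  (n ^_ sumn mu)%:R / ((z * z' + n%:R) * n.+1%:R * (dimY la)%:R) *
  \sum_(nu <- Yn n.+1 | nearrow la nu) poch2 z z' la nu * (dimc mu nu)%:R.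
Proof.
move=> hla zn; have [_ sl] := YnP hla.
rewrite /Tn [RHS]big_distrr [RHS]big_mkcond /= big_seq [RHS]big_seq.
apply: eq_bigr => nu hnu.
rewrite sum_pdown_FS // /pup sl; case: ifP => _; last by rewrite !mul0r.
rewrite /poch2; field; apply/and4P; split => //.
- exact: natr_dimY_neq0 hla.
- by rewrite addrC natr1 pnatr_eq0.
- exact: natr_dimY_neq0 hnu.
Qed.

Lemma sum_poch2_FS (z z' : F) mu la n : la \in Yn n ->
  \sum_(mub <- Yn (sumn mu).-1 | nearrow mub mu) poch z mub mu * poch z' mub mu * FS F mub la =
  (n ^_ (sumn mu).-1)%:R / (dimY la)%:R *
  \sum_(mub <- Yn (sumn mu).-1 | nearrow mub mu) poch2 z z' mub mu * (dimc mub la)%:R.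
Proof.
move=> hla; rewrite mulr_sumr big_seq_cond [RHS]big_seq_cond.
apply: eq_bigr => mub /andP[/YnP[_ sb] _].
by rewrite (FS_Yn _ hla) sb /poch2; ring.
Qed.

End Kernels.

Lemma admissible_mul_gt0 (R : rcfType) (z z' : R[i]) : admissible z z' -> 0 < z * z'.
Proof.
case=> [[hz ->]|[N [hz [hz' [/andP[a1 a2] /andP[b1 b2]]]]]].
- case: z hz => a b /= hb; rewrite ltcE /=.
  have -> : a * - b + b * a = 0 by ring.
  rewrite eqxx /=; have : 0 < b * b by rewrite -expr2 lt_def sqrf_eq0 hb sqr_ge0.
  nra.
- move: hz hz' a1 a2 b1 b2; case: z => a b; case: z' => c d /= -> -> a1 a2 b1 b2.
  rewrite ltcE /= !mul0r !mulr0 subr0 addr0 eqxx /=.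
  case: (lerP 0 N) => hN.
  + have : 0 <= N%:~R :> R by rewrite ler0z.
    nra.
  + have : (N + 1)%:~R <= 0 :> R by rewrite lerz0; lia.
    nra.
Qed.

Theorem lemma5p2 (R : rcfType) (z z' : R[i]) (mu : seq nat) (n : nat)
  (la : seq nat) :
  admissible z z' -> is_part mu -> (1 <= n)%N -> la \in Yn n ->
  let m := sumn mu in
  Tn z z' n (FS _ mu) la - FS _ mu la =
    - ((m%:R * (m%:R - 1 + z * z')) / (n.+1%:R * (z * z' + n%:R))) * FS _ mu la
    + ((n.+1%:R - m%:R) / (n.+1%:R * (z * z' + n%:R))) *
      \sum_(mub <- Yn m.-1 | nearrow mub mu)
         poch z mub mu * poch z' mub mu * FS _ mub la.
Proof.
move=> /admissible_mul_gt0 zz_gt0 pmu _ hla m; rewrite {}/m.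
have zn : z * z' + n%:R != 0 by rewrite gt_eqF // ltr_wpDr.
have dla := natr_dimY_neq0 R[i] hla.
have n1 : 1 + n%:R != 0 :> R[i] by rewrite addrC natr1 pnatr_eq0.
rewrite (Tn_FS _ hla zn) sum_poch2_dimc // (FS_Yn _ mu hla) (sum_poch2_FS z z' mu hla).
set Y := \sum_(mub <- _ | _) _.
case: (posnP (sumn mu)) => [m0|m_gt0].
  have -> : Y = 0.
    by rewrite /Y big1_seq // => mub /andP[h /YnP[pb _]]; move: (nearrow_sumn pb h); rewrite m0.
  by rewrite m0 /chain_coef ffactn0; field; rewrite dla zn n1.
by rewrite (natr_ffact_pred _ _ m_gt0) /chain_coef; field; rewrite dla zn n1.
Qed.
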